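(* Let $\Lambda=\operatorname{diag}(1,2)$. Among all $2\times2$ unimodular zerofree matrices $M$ such that $M\Lambda M^{-1}$ is also zerofree, the minimum of $\|M\Lambda M^{-1}\|$ is $4$, attained by $M=\begin{pmatrix}1&2\\1&3\end{pmatrix}$, for which $M\Lambda M^{-1}=\begin{pmatrix}-1&2\\-3&4\end{pmatrix}$.
   Context: A square integer matrix is unimodular if its determinant is $\pm1$. An invertible matrix $Z$ is zerofree if none of the entries of $Z$ and none of the entries of $Z^{-1}$ is zero. For a matrix $A$, $\|A\|$ denotes the maximum of the absolute values of its entries. *)

From HB Require Import structures.
From mathcomp Require Import all_boot all_order all_algebra.
Set Implicit Arguments. Unset Strict Implicit. Unset Printing Implicit Defensive.
Import Order.TTheory GRing.Theory Num.Theory.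
Local Open Scope ring_scope.

Definition mx2 {R : Type} (a b c d : R) : 'M[R]_2 :=
  \matrix_(i < 2, j < 2)
    if (i == 0 :> nat) then (if (j == 0 :> nat) then a else b)
    else (if (j == 0 :> nat) then c else d).

Definition unimodular (n : nat) (M : 'M[int]_n) : Prop :=
  \det M = 1 \/ \det M = -1.

Definition toQ (m n : nat) (M : 'M[int]_(m, n)) : 'M[rat]_(m, n) :=
  map_mx (fun z : int => z%:~R) M.

Definition zerofree (n : nat) (Z : 'M[rat]_n) : Prop :=
  Z \in unitmx /\ (forall i j, Z i j != 0) /\ (forall i j, invmx Z i j != 0).

Definition mxnorm (m n : nat) (A : 'M[rat]_(m, n)) : rat :=
  \big[Num.max/0]_(i < m) \big[Num.max/0]_(j < n) `|A i j|.

Definition Lambda : 'M[rat]_2 := mx2 1 0 0 2.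

Definition conjL (M : 'M[int]_2) : 'M[rat]_2 :=
  toQ M *m Lambda *m invmx (toQ M).

From HB Require Import structures.
From mathcomp Require Import all_boot all_order all_algebra.
From mathcomp Require Import zify ring.
Import Order.TTheory GRing.Theory Num.Theory.
Local Open Scope ring_scope.

(* Write M = [[a, b]; [c, d]], p = a d and q = b c, so that p - q = det M = +-1.
   The diagonal entries of M Lambda M^-1 are (p - 2 q) / det M and
   (2 p - q) / det M.  Zerofreeness of M and of M Lambda M^-1 forces
   p, q, p - 2 q, 2 p - q <> 0; with p = q +- 1 this excludes exactly the four
   values of q for which both |p - 2 q| and |2 p - q| are at most 3. *)

Lemma mx2_eta {R : Type} (M : 'M[R]_2) :
  M = mx2 (M 0 0) (M 0 1) (M 1 0) (M 1 1).
Proof.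
apply/matrixP => i j; rewrite mxE.
by case: i => [[|[|i]] Hi]; case: j => [[|[|j]] Hj] //=; congr (M _ _); apply/val_inj.
Qed.

Lemma map_mx2 {R S : Type} (f : R -> S) (a b c d : R) :
  map_mx f (mx2 a b c d) = mx2 (f a) (f b) (f c) (f d).
Proof. by apply/matrixP => i j; rewrite !mxE; case: ifP; case: ifP. Qed.

Lemma mx2_mul {R : comNzRingType} (a b c d a' b' c' d' : R) :
  mx2 a b c d *m mx2 a' b' c' d' =
  mx2 (a * a' + b * c') (a * b' + b * d') (c * a' + d * c') (c * b' + d * d').
Proof.
apply/matrixP => i j; rewrite !mxE !big_ord_recl big_ord0 !mxE /=.
by case: i => [[|[|i]] Hi]; case: j => [[|[|j]] Hj] //=; rewrite addr0.
Qed.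

Lemma mx2_1 {R : comNzRingType} : (1%:M : 'M[R]_2) = mx2 1 0 0 1.
Proof.
by apply/matrixP => i j; rewrite !mxE; case: i => [[|[|i]] Hi]; case: j => [[|[|j]] Hj].
Qed.

Lemma det_mx2 {R : comNzRingType} (a b c d : R) :
  \det (mx2 a b c d) = a * d - b * c.
Proof.
rewrite (expand_det_row _ 0) !big_ord_recl big_ord0 /cofactor !det_mx11 !mxE /=.
by rewrite !expr0 !expr1 !mul1r addr0 mulN1r mulrN.
Qed.

Section Inverse2.

Variables (F : fieldType) (a b c d : F).
Let e := a * d - b * c.
Hypothesis e_neq0 : e != 0.

Lemma mx2_mul_adj_div : mx2 a b c d *m mx2 (d / e) (- b / e) (- c / e) (a / e) = 1%:M.
Proof. by rewrite mx2_mul mx2_1 /e; congr mx2; field. Qed.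

Lemma unitmx_mx2 : mx2 a b c d \in unitmx.
Proof. exact: (mulmx1_unit mx2_mul_adj_div).1. Qed.

Lemma invmx_mx2 : invmx (mx2 a b c d) = mx2 (d / e) (- b / e) (- c / e) (a / e).
Proof.
by rewrite -[invmx _]mulmx1 -mx2_mul_adj_div mulmxA mulVmx ?unitmx_mx2 // mul1mx.
Qed.

Lemma conj_diag_mx2 (l m : F) :
  mx2 a b c d *m mx2 l 0 0 m *m invmx (mx2 a b c d) =
  mx2 ((l * a * d - m * b * c) / e) ((m - l) * a * b / e)
      ((l - m) * c * d / e) ((m * a * d - l * b * c) / e).
Proof. by rewrite invmx_mx2 !mx2_mul /e; congr mx2; field. Qed.

End Inverse2.

Lemma zerofree_mx2 (a b c d : rat) : a * d - b * c != 0 ->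
  a != 0 -> b != 0 -> c != 0 -> d != 0 -> zerofree (mx2 a b c d).
Proof.
move=> e_neq0 *; split; first exact: unitmx_mx2.
split=> i j; rewrite ?invmx_mx2 // mxE;
  by case: ifP => _; case: ifP => _; rewrite ?mulf_neq0 ?oppr_eq0 ?invr_eq0.
Qed.

Lemma mxnorm_ge_entry {m n : nat} (A : 'M[rat]_(m, n)) i j : `|A i j| <= mxnorm A.
Proof. exact: le_trans (le_bigmax _ _ j) (le_bigmax _ _ i). Qed.

Lemma conjL_mx2 (a b c d : int) : a * d - b * c != 0 ->
  let e := (a * d - b * c)%:~R : rat in
  conjL (mx2 a b c d) =
  mx2 ((a * d - 2 * b * c)%:~R / e) ((a * b)%:~R / e)
      ((- (c * d))%:~R / e) ((2 * a * d - b * c)%:~R / e).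
Proof.
move=> e_neq0 e; have eQ_neq0 : (a%:~R * d%:~R - b%:~R * c%:~R : rat) != 0.
  by rewrite -!rmorphM -rmorphB intr_eq0.
rewrite /conjL /toQ map_mx2 /Lambda conj_diag_mx2 // /e.
by congr mx2; rewrite ?rmorphB ?rmorphN ?rmorphM /=; field.
Qed.

Lemma unimodular_diag_bound {p q : int} : (p - q = 1 \/ p - q = -1) ->
  p != 0 -> q != 0 -> p - 2 * q != 0 -> 2 * p - q != 0 ->
  4 <= `|p - 2 * q| \/ 4 <= `|2 * p - q|.
Proof. lia. Qed.

Lemma mxnorm_conjL_ge4 (M : 'M[int]_2) :
  unimodular M -> zerofree (toQ M) -> zerofree (conjL M) -> 4 <= mxnorm (conjL M).
Proof.
rewrite [M]mx2_eta; move: (M 0 0) (M 0 1) (M 1 0) (M 1 1) => a b c d.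
rewrite /unimodular det_mx2 /toQ map_mx2 => unimod [_ [M_neq0 _]] [_ [C_neq0 _]].
have e_neq0 : a * d - b * c != 0 by case: unimod => ->.
rewrite conjL_mx2 // in C_neq0 *.
have quo_neq0 (x : int) : x%:~R / (a * d - b * c)%:~R != 0 :> rat -> x != 0.
  by rewrite mulf_eq0 invr_eq0 !intr_eq0 negb_or => /andP[].
have norm_quo (x : int) : `|x%:~R / (a * d - b * c)%:~R : rat| = `|x|%:~R.
  by rewrite normf_div -!intr_norm; case: unimod => ->; rewrite divr1.
have a_neq0 : a != 0 by have := M_neq0 0 0; rewrite mxE /= intr_eq0.
have b_neq0 : b != 0 by have := M_neq0 0 1; rewrite mxE /= intr_eq0.
have c_neq0 : c != 0 by have := M_neq0 1 0; rewrite mxE /= intr_eq0.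
have d_neq0 : d != 0 by have := M_neq0 1 1; rewrite mxE /= intr_eq0.
have d00 : a * d - 2 * (b * c) != 0.
  by have := C_neq0 0 0; rewrite mxE /= mulrA => /quo_neq0.
have d11 : 2 * (a * d) - b * c != 0.
  by have := C_neq0 1 1; rewrite mxE /= mulrA => /quo_neq0.
have [le4|le4] := unimodular_diag_bound unimod (mulf_neq0 a_neq0 d_neq0)
  (mulf_neq0 b_neq0 c_neq0) d00 d11.
- apply: le_trans _ (mxnorm_ge_entry _ 0 0).
  by rewrite mxE /= norm_quo -[4]/((4 : int)%:~R) ler_int -mulrA.
- apply: le_trans _ (mxnorm_ge_entry _ 1 1).
  by rewrite mxE /= norm_quo -[4]/((4 : int)%:~R) ler_int -!mulrA.
Qed.

Lemma conjL_witness : conjL (mx2 1 2 1 3) = mx2 (-1) 2 (-3) 4.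
Proof. by rewrite conjL_mx2. Qed.

Theorem mainTheorem7 :
  (forall M : 'M[int]_2,
      unimodular M -> zerofree (toQ M) -> zerofree (conjL M) ->
      4 <= mxnorm (conjL M))
  /\ (unimodular (mx2 1 2 1 3) /\ zerofree (toQ (mx2 1 2 1 3))
      /\ zerofree (conjL (mx2 1 2 1 3))
      /\ conjL (mx2 1 2 1 3) = mx2 (-1) 2 (-3) 4
      /\ mxnorm (conjL (mx2 1 2 1 3)) = 4).
Proof.
split; first exact: mxnorm_conjL_ge4.
split; first by left; rewrite det_mx2.
split; first by rewrite /toQ map_mx2; apply: zerofree_mx2.
split; first by rewrite conjL_witness; apply: zerofree_mx2.
split; first exact: conjL_witness.
by rewrite conjL_witness /mxnorm !big_ord_recl !big_ord0 !mxE.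
Qed.
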